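(* If $T\in\mathcal{T}^*_3$ has root $v$ and $n$ vertices of which $k$ are not leaves, then $\lambda(T,v)\ge\frac{n+1}{2}+\frac{k-1}{10}$.
   Context: All trees are finite. $\mathcal{T}^*_3$ is the set of rooted trees in which the root has degree at least 2 and every other vertex of degree at least 2 has degree at least 3, together with the single-vertex rooted tree. Here leaves are the non-root vertices of degree 1; the root is counted among the $k$ non-leaf vertices. A subtree is a nonempty vertex set inducing a connected subgraph, and $\lambda(T,v)$ is the average number of vertices over all subtrees of $T$ containing $v$. *)

From mathcomp Require Import all_boot all_order all_algebra.
Set Implicit Arguments. Unset Strict Implicit. Unset Printing Implicit Defensive.
Import Order.TTheory GRing.Theory Num.Theory.

(* Tree: connected and with exactly #|T| - 1 (undirected) edges; the set of
   ordered pairs (x,y) with e x y counts each edge twice. *)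
Definition is_tree (T : finType) (e : rel T) : Prop :=
  [/\ symmetric e, irreflexive e,
      (forall x y, connect e x y) &
      #|[set p : T * T | e p.1 p.2]| = (#|T|.-1).*2 ].

Definition deg (T : finType) (e : rel T) (x : T) : nat := #|[set y | e x y]|.

Definition in_T3star (T : finType) (e : rel T) (v : T) : Prop :=
  #|T| = 1%N \/
  (2 <= deg e v /\ forall x, x != v -> 2 <= deg e x -> 3 <= deg e x)%N.

Definition leaf (T : finType) (e : rel T) (v x : T) : bool :=
  (x != v) && (deg e x == 1%N).

Definition num_nonleaves (T : finType) (e : rel T) (v : T) : nat :=
  #|[set x | ~~ leaf e v x]|.

Definition induced (T : finType) (e : rel T) (S : {set T}) : rel T :=
  [rel x y | [&& x \in S, y \in S & e x y]].

Definition is_subtree (T : finType) (e : rel T) (S : {set T}) : bool :=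
  (S != set0) && [forall x in S, forall y in S, connect (induced e S) x y].

Definition subtrees_at (T : finType) (e : rel T) (v : T) : {set {set T}} :=
  [set S : {set T} | is_subtree e S && (v \in S)].

Definition lambda (T : finType) (e : rel T) (v : T) : rat :=
  ((\sum_(S in subtrees_at e v) #|S|)%:R / (#|subtrees_at e v|)%:R)%R.

From mathcomp Require Import all_boot all_order all_algebra.
From mathcomp Require Import zify ring lra.
Import Order.TTheory GRing.Theory Num.Theory.
Set Implicit Arguments. Unset Strict Implicit. Unset Printing Implicit Defensive.

(* Let C be the branch at a neighbour c of the root r, that is the component
   of c once r is deleted.  A subtree containing r is a subtree of the rest
   containing r together with either nothing of C or a subtree of C containing
   c; so, writing N for the number of subtrees containing the root and S for
   the sum of their orders,
     N = N' (N_C + 1),   S = S' (N_C + 1) + N' S_C.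
   With n the order, L the number of leaves and d the degree of the root,
   induction on n proves
     N (5 n + (n - L) + 4) <= 10 S,   2^L <= N,   n - L + d <= L + 1,
   the first of which is the theorem, n - L being the number of non-leaves.
   Absorbing a branch that is a single leaf is direct.  Otherwise c has degree
   at least 2 inside C (this is where T*_3 enters), so the third inequality for
   C gives n_C <= 2 L_C - 1 and the second 2^L_C <= N_C, whence
   5 n_C + (n_C - L_C) <= 11 L_C - 6 <= 4 N_C, exactly what the first
   inequality needs.  The acyclicity used to split off C comes from the edge
   count: removing an edge of a cycle would leave a connected graph with fewer
   than n - 1 edges. *)

Definition edges (T : finType) (e : rel T) : {set T * T} :=
  [set p : T * T | e p.1 p.2].

Section ConnectedEdges.
Variables (T : finType) (e : rel T) (a : T).

Fixpoint ball (m : nat) : {set T} :=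
  if m is m'.+1 then ball m' :|: [set y | [exists x in ball m', e x y]]
  else [set a].

Lemma ball_path x p m :
  path e x p -> x \in ball m -> last x p \in ball (m + size p).
Proof.
elim: p x m => [|y p IHp] x m /=; first by rewrite addn0.
move=> /andP[exy pth] xm; rewrite -addSnnS; apply: IHp => //=.
by rewrite /= !inE; apply/orP; right; apply/existsP; exists x; rewrite xm.
Qed.

Lemma exists_parent : (forall x, connect e a x) ->
  exists (par : T -> T) (rank : T -> nat),
    forall x, x != a -> e (par x) x /\ (rank (par x) < rank x)%N.
Proof.
move=> conn.
have in_ball x : exists m, x \in ball m.
  have /connectP[p pth ->] := conn x.
  by exists (0 + size p); apply: ball_path; rewrite // inE.
pose rank x := ex_minn (in_ball x).
have has_par x : x != a -> exists y, e y x && (rank y < rank x)%N.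
  move=> xa; rewrite /rank; case: ex_minnP => [[|m]] /=; first by rewrite inE (negPf xa).
  rewrite inE => /orP[xm min_m|]; first by have := min_m _ xm; rewrite ltnn.
  rewrite inE => /existsP[y /andP[ym eyx]] _; exists y; rewrite eyx /=.
  by case: ex_minnP => k _ /(_ _ ym).
pose par x := odflt x [pick y | e y x && (rank y < rank x)%N].
exists par, rank => x xa; rewrite /par; case: pickP => [y /andP[] //|none].
by have [y] := has_par x xa; rewrite none.
Qed.

Lemma card_edges_connected : symmetric e -> (forall x, connect e a x) ->
  ((#|T|.-1).*2 <= #|edges e|)%N.
Proof.
move=> e_sym /exists_parent[par [rank par_ok]].
pose orient (u : T * bool) := if u.2 then (u.1, par u.1) else (par u.1, u.1).
pose D := setX [set~ a] [set: bool].
have cardD : #|D| = (#|T|.-1).*2.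
  by rewrite cardsX cardsC1 cardsT card_bool muln2.
have orient_inj : {in D &, injective orient}.
  move=> [x b] [y b']; rewrite !inE /= !andbT => /par_ok[_ ltx] /par_ok[_ lty].
  have no_swap : x = par y -> par x = y -> False.
    by move=> exy eyx; move: ltx lty; rewrite eyx -exy => /ltn_trans lt /lt; rewrite ltnn.
  case: b; case: b'; rewrite /orient /= => -[].
  - by move=> ->.
  - by move=> exy eyx; case: no_swap.
  - by move=> eyx exy; case: no_swap.
  - by move=> _ ->.
rewrite -cardD -(card_in_imset orient_inj); apply: subset_leq_card.
apply/subsetP => _ /imsetP[[x b] xD ->]; move: xD; rewrite !inE /= andbT.
by move=> /par_ok[e_par _]; case: b; rewrite /orient //= e_sym.
Qed.

End ConnectedEdges.

Section RemoveEdge.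
Variables (T : finType) (e : rel T) (x y : T).
Hypothesis e_sym : symmetric e.

Definition remove_edge : rel T :=
  [rel a b | e a b && ((a, b) \notin [set (x, y); (y, x)])].

Lemma remove_edge_sym : symmetric remove_edge.
Proof.
move=> a b; rewrite /remove_edge /= e_sym !inE !xpair_eqE; congr (_ && ~~ _).
by rewrite orbC; congr (_ || _); apply: andbC.
Qed.

Lemma edges_remove_edge :
  e x y -> x != y -> #|edges remove_edge| = (#|edges e| - 2)%N.
Proof.
move=> exy xy.
have -> : edges remove_edge = edges e :\: [set (x, y); (y, x)].
  by apply/setP => -[a b]; rewrite /edges /remove_edge !inE /= !inE andbC.
have sub : [set (x, y); (y, x)] \subset edges e.
  by apply/subsetP => p; rewrite !inE => /orP[] /eqP-> /=; rewrite // e_sym.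
by rewrite cardsD (setIidPr sub) cards2 xpair_eqE (negPf xy).
Qed.

Lemma connect_remove_edge :
  connect remove_edge x y -> subrel (connect e) (connect remove_edge).
Proof.
move=> cxy a b /connectP[p pth ->]; elim: p a pth => [|u p IHp] a /=.
  by rewrite connect0.
move=> /andP[eau pth]; apply: connect_trans (IHp u pth).
case: (boolP ((a, u) \in [set (x, y); (y, x)])) => [|not_xy]; last first.
  by apply: connect1; rewrite /remove_edge /= eau not_xy.
by rewrite !inE !xpair_eqE => /orP[] /andP[/eqP-> /eqP->];
  rewrite // (sym_connect_sym remove_edge_sym).
Qed.

End RemoveEdge.

Section InducedConnectivity.
Variables (T : finType) (e : rel T).

Definition connected_in (A : {set T}) : Prop :=
  forall x y, x \in A -> y \in A -> connect (induced e A) x y.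

Definition acyclic_in (A : {set T}) : Prop :=
  forall x y z, x \in A -> y \in A -> z \in A -> y != z -> e x y -> e x z ->
    ~~ connect (induced e (A :\ x)) y z.

Lemma inducedE (A : {set T}) x y :
  induced e A x y = [&& x \in A, y \in A & e x y].
Proof. by []. Qed.

Lemma induced_connect_sub (A B : {set T}) x y :
  A \subset B -> connect (induced e A) x y -> connect (induced e B) x y.
Proof.
move=> /subsetP AB; apply: connect_sub => u w /and3P[uA wA euw].
by apply: connect1; rewrite inducedE !AB.
Qed.

Lemma induced_connect_mem (A : {set T}) x y :
  connect (induced e A) x y -> x \in A -> y \in A.
Proof.
move=> /connectP[p + ->]; elim: p x => [|z p IHp] x //=.
by move=> /andP[/and3P[_ zA _] pth] _; apply: IHp.
Qed.

Lemma acyclic_in_sub (A B : {set T}) : B \subset A -> acyclic_in A -> acyclic_in B.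
Proof.
move=> /subsetP BA acA x y z xB yB zB yz exy exz.
apply: contraNN (acA x y z (BA _ xB) (BA _ yB) (BA _ zB) yz exy exz).
by apply: induced_connect_sub; apply/subsetP => u; rewrite !inE => /andP[-> /BA].
Qed.

Lemma subtreeP (S : {set T}) :
  reflect (S != set0 /\ connected_in S) (is_subtree e S).
Proof.
apply: (iffP andP) => -[-> conn]; split => //.
  by move=> x y xS yS; move/forall_inP/(_ x xS)/forall_inP: conn; apply.
by apply/forall_inP => x xS; apply/forall_inP => y yS; apply: conn.
Qed.

Lemma path_closed_reach (B D : {set T}) z x p :
  (forall u y, u \in B -> u != z -> y \in D -> e u y -> y \in B) ->
  x \in B -> path (induced e D) x p -> (last x p == z) || (last x p \notin B) ->
  (z \in B) && connect (induced e B) x z.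
Proof.
move=> closedB; elim: p x => [|y p IHp] x /= xB.
  by move=> _ /orP[/eqP <-|]; rewrite ?xB ?connect0.
move=> /andP[/and3P[_ yD exy] pth] end_p.
have [<-|xz] := eqVneq x z; first by rewrite xB connect0.
have yB := closedB _ _ xB xz yD exy.
have /andP[-> cyz] := IHp y yB pth end_p.
by apply: connect_trans cyz; apply: connect1; rewrite inducedE xB yB.
Qed.

Hypothesis e_sym : symmetric e.

Lemma induced_sym (A : {set T}) : symmetric (induced e A).
Proof. by move=> x y; rewrite !inducedE e_sym andbCA. Qed.

Lemma connected_in_to (A : {set T}) r : r \in A ->
  (forall x, x \in A -> connect (induced e A) x r) -> connected_in A.
Proof.
move=> rA conn x y xA yA; apply: connect_trans (conn x xA) _.
by rewrite (sym_connect_sym (induced_sym A)) conn.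
Qed.

Lemma connected_in_closed (B D : {set T}) z :
  (forall u y, u \in B -> u != z -> y \in D -> e u y -> y \in B) ->
  z \in B -> (forall x, x \in B -> connect (induced e D) x z) -> connected_in B.
Proof.
move=> closedB zB conn; apply: (connected_in_to zB) => x xB.
have /connectP[p pth lp] := conn x xB.
by have := path_closed_reach closedB xB pth; rewrite -lp eqxx => /(_ isT)/andP[].
Qed.

End InducedConnectivity.

Lemma tree_acyclic (T : finType) (e : rel T) : is_tree e -> acyclic_in e setT.
Proof.
case=> e_sym e_irr conn card_e x y z _ _ _ yz exy exz; apply/negP => cyz.
have xy : x != y by apply: contraTneq exy => ->; rewrite e_irr.
pose e' := remove_edge e x y.
have cyz' : connect e' y z.
  apply: connect_sub cyz => u w /and3P[]; rewrite !inE !andbT => ux wx euw.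
  apply: connect1; rewrite /e' /remove_edge /= euw !inE !xpair_eqE.
  by rewrite (negPf ux) (negPf wx) andbF.
have exz' : e' x z.
  rewrite /e' /remove_edge /= exz !inE !xpair_eqE.
  by rewrite [z == y]eq_sym (negPf yz) (negPf xy) !andbF.
have cxy' : connect e' x y.
  apply: connect_trans (connect1 exz') _.
  by rewrite (sym_connect_sym (remove_edge_sym x y e_sym)).
have := card_edges_connected (remove_edge_sym x y e_sym)
  (fun b => connect_remove_edge e_sym cxy' (conn x b)).
rewrite edges_remove_edge // [#|edges e|]card_e.
have : (1 < #|T|)%N by apply: leq_trans (max_card (mem [set x; y])); rewrite cards2 xy.
by case: #|T| => [|[|n]] //= _; rewrite -!muln2; lia.
Qed.

Section RootedCounts.
Variables (T : finType) (e : rel T).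

Definition deg_in (A : {set T}) x : nat := #|[set y in A | e x y]|.

Definition leaf_in (A : {set T}) r x : bool := (x != r) && (deg_in A x == 1%N).

Definition num_leaves_in (A : {set T}) r : nat := \sum_(x in A) leaf_in A r x.

Definition T3_in (A : {set T}) r : Prop :=
  forall x, x \in A -> x != r -> (2 <= deg_in A x)%N -> (3 <= deg_in A x)%N.

Definition subtrees_in (A : {set T}) r : {set {set T}} :=
  [set S : {set T} | [&& is_subtree e S, r \in S & S \subset A]].

Definition size_sum (A : {set T}) r : nat := \sum_(S in subtrees_in A r) #|S|.

Lemma mem_subtrees_in (A : {set T}) r S :
  (S \in subtrees_in A r) = [&& is_subtree e S, r \in S & S \subset A].
Proof. by rewrite inE. Qed.

Lemma set0_notin_subtrees_in (A : {set T}) r : set0 \notin subtrees_in A r.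
Proof. by rewrite mem_subtrees_in inE andbF. Qed.

Lemma num_leaves_in_lt (A : {set T}) r : r \in A -> (num_leaves_in A r < #|A|)%N.
Proof.
move=> rA; rewrite /num_leaves_in (bigD1 r) //= /leaf_in eqxx add0n.
rewrite (cardsD1 r A) rA add1n ltnS -sum1_card.
rewrite (eq_bigl (mem (A :\ r))) => [|x]; last by rewrite !inE andbC.
by apply: leq_sum => x _; apply: leq_b1.
Qed.

Lemma subtrees_in_set1 r : subtrees_in [set r] r = [set [set r]].
Proof.
apply/setP => S; rewrite mem_subtrees_in !inE subset1.
have [->|_] /= := eqVneq S [set r]; last first.
  by case: eqP => [->|_]; rewrite ?andbF // /is_subtree eqxx.
rewrite /is_subtree -card_gt0 cards1 set11 /= !andbT.
by apply/forall_inP => x /set1P-> ; apply/forall_inP => y /set1P->; apply: connect0.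
Qed.

Lemma size_sum_set1 r : size_sum [set r] r = 1%N.
Proof. by rewrite /size_sum subtrees_in_set1 big_set1 cards1. Qed.

Lemma deg_in_set1 r : irreflexive e -> deg_in [set r] r = 0%N.
Proof.
move=> e_irr; apply/eqP; rewrite cards_eq0; apply/eqP/setP => y.
by rewrite !inE; case: eqP => // ->; rewrite e_irr.
Qed.

Lemma num_leaves_in_set1 r : num_leaves_in [set r] r = 0%N.
Proof. by rewrite /num_leaves_in big_set1 /leaf_in eqxx. Qed.

End RootedCounts.

Lemma sum_setX (I J : finType) (P : {set I}) (Q : {set J}) (F : I -> nat) (G : J -> nat) :
  \sum_(p in setX P Q) (F p.1 + G p.2) =
  ((\sum_(i in P) F i) * #|Q| + #|P| * \sum_(j in Q) G j)%N.
Proof.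
rewrite (eq_bigl (fun p => (p.1 \in P) && (p.2 \in Q))) => [|[a b]]; last first.
  by rewrite in_setX.
rewrite -(pair_big (mem P) (mem Q) (fun a b => F a + G b)) /=.
rewrite big_distrl /= -sum_nat_const -big_split /=.
by apply: eq_bigr => i _; rewrite big_split /= sum_nat_const mulnC.
Qed.

Definition lambda_invariant (N S n L d : nat) : Prop :=
  [/\ N * (5 * n + (n - L) + 4) <= 10 * S, 2 ^ L <= N & n - L + d <= L + 1]%N.

Lemma lambda_invariant_add_leaf N S n L d : (L < n)%N ->
  lambda_invariant N S n L d -> lambda_invariant (N * 2) (S * 2 + N) n.+1 L.+1 d.+1.
Proof.
move=> Ln [inv1 inv2 inv3]; split; last 2 first.
- by rewrite expnS mulnC leq_mul2r inv2 orbT.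
- lia.
have -> : (n.+1 - L.+1 = n - L)%N by [].
nia.
Qed.

Lemma linear_le_exp2 L : (2 <= L)%N -> (11 * L <= 4 * 2 ^ L + 6)%N.
Proof.
elim: L => [|[|[|L]] IHL] // _; have := IHL isT.
have : (1 <= 2 ^ L)%N by rewrite expn_gt0.
by rewrite !expnS; lia.
Qed.

Lemma lambda_invariant_add_branch N S n L d NC SC nC LC dC :
  (L < n)%N -> (LC < nC)%N -> (2 <= dC)%N ->
  lambda_invariant N S n L d -> lambda_invariant NC SC nC LC dC ->
  lambda_invariant (N * NC.+1) (S * NC.+1 + N * SC) (n + nC) (L + LC) d.+1.
Proof.
move=> Ln LCnC dC2 [inv1 inv2 inv3] [invC1 invC2 invC3].
have branch_small : (5 * nC + (nC - LC) <= 4 * NC)%N.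
  have LC2 : (2 <= LC)%N by lia.
  by have := linear_le_exp2 LC2; lia.
split; last 2 first.
- by rewrite expnD leq_mul // ltnW.
- lia.
have -> : (n + nC - (L + LC) = (n - L) + (nC - LC))%N by lia.
have h1 := leq_mul inv1 (leqnn NC.+1).
have h2 := leq_mul (leqnn N) invC1.
have h3 := leq_mul (leqnn N) branch_small.
move: h1 h2 h3; move: (n - L)%N (nC - LC)%N => k kC; nia.
Qed.

Definition subtree_invariant (T : finType) (e : rel T) (A : {set T}) r : Prop :=
  lambda_invariant #|subtrees_in e A r| (size_sum e A r) #|A|
    (num_leaves_in e A r) (deg_in e A r).

Definition branch (T : finType) (e : rel T) (A : {set T}) (r c : T) : {set T} :=
  [set x | connect (induced e (A :\ r)) c x].

Section Branch.
Variables (T : finType) (e : rel T) (A : {set T}) (r c : T).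
Hypotheses (e_sym : symmetric e) (e_irr : irreflexive e).
Hypotheses (rA : r \in A) (cA : c \in A) (erc : e r c).
Hypotheses (A_conn : connected_in e A) (A_acyc : acyclic_in e A).

Local Notation C := (branch e A r c).
Local Notation A' := (A :\: C).

Lemma mem_branch x : (x \in C) = connect (induced e (A :\ r)) c x.
Proof. by rewrite inE. Qed.

Lemma branch_root_neq : c != r.
Proof. by apply: contraTneq erc => ->; rewrite e_irr. Qed.

Lemma branch_root_mem : c \in C.
Proof. by rewrite mem_branch connect0. Qed.

Lemma branch_sub : C \subset A :\ r.
Proof.
apply/subsetP => x; rewrite mem_branch => /induced_connect_mem; apply.
by rewrite !inE branch_root_neq.
Qed.

Lemma branch_subA : C \subset A.
Proof. exact: subset_trans branch_sub (subD1set A r). Qed.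

Lemma root_notin_branch : r \notin C.
Proof. by apply/negP => /(subsetP branch_sub); rewrite !inE eqxx. Qed.

Lemma root_in_rest : r \in A'.
Proof. by rewrite inE root_notin_branch. Qed.

Lemma card_branch_split : #|A| = (#|A'| + #|C|)%N.
Proof. by rewrite -(cardsID C A) (setIidPr branch_subA) addnC. Qed.

Lemma branch_closed u y : u \in C -> y \in A -> y != r -> e u y -> y \in C.
Proof.
move=> uC yA yr euy; have uAr := subsetP branch_sub u uC.
move: uC; rewrite !mem_branch => /connect_trans; apply; apply: connect1.
by rewrite inducedE uAr !inE yr yA.
Qed.

Lemma branch_root_edge y : y \in C -> e r y -> y = c.
Proof.
move=> yC ery; have yA := subsetP branch_subA y yC.
by apply/eqP; apply: contraTT yC => yc; rewrite mem_branch A_acyc // eq_sym.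
Qed.

Lemma branch_closed_off_root u y : u \in C -> u != c -> y \in A -> e u y -> y \in C.
Proof.
move=> uC uc yA euy; have [yr|yr] := eqVneq y r; last exact: branch_closed uC yA yr euy.
by move: euy; rewrite yr e_sym => /(branch_root_edge uC) /eqP; rewrite (negPf uc).
Qed.

Lemma rest_closed u y : u \in A' -> u != r -> y \in A -> e u y -> y \in A'.
Proof.
move=> /setDP[uA uC] ur yA euy; rewrite inE yA andbT.
by apply: contra uC => yC; apply: branch_closed yC uA ur _; rewrite e_sym.
Qed.

Lemma connected_rest : connected_in e A'.
Proof.
apply: (connected_in_closed e_sym rest_closed root_in_rest) => x /setDP[xA _].
exact: A_conn.
Qed.

Lemma connected_branch : connected_in e C.
Proof.
apply: (connected_in_closed (D := A :\ r) e_sym _ branch_root_mem) => [u y uC uc|x].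
  by rewrite in_setD1 => /andP[yr yA]; apply: branch_closed uC yA yr.
by rewrite mem_branch (sym_connect_sym (induced_sym e_sym _)).
Qed.

Lemma deg_in_rest x : x \in A' -> x != r -> deg_in e A x = deg_in e A' x.
Proof.
move=> xA' xr; apply: eq_card => y; rewrite 2!in_set.
apply/andP/andP => -[yA exy]; split => //; first exact: rest_closed exy.
by case/setDP: yA.
Qed.

Lemma deg_in_branch x : x \in C -> x != c -> deg_in e A x = deg_in e C x.
Proof.
move=> xC xc; apply: eq_card => y; rewrite 2!in_set.
apply/andP/andP => -[yA exy]; split => //; first exact: branch_closed_off_root exy.
exact: (subsetP branch_subA).
Qed.

Lemma deg_in_root_split : deg_in e A r = (deg_in e A' r).+1.
Proof.
rewrite /deg_in.
have -> : [set y in A | e r y] = c |: [set y in A' | e r y].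
  apply/setP => y; rewrite in_setU1 2!in_set in_setD.
  have [->|yc] /= := eqVneq y c; first by rewrite cA erc.
  have [yC|//] /= := boolP (y \in C).
  by apply/negbTE; apply: contra yc => /andP[_ /(branch_root_edge yC)->].
by rewrite cardsU1 in_set in_setD branch_root_mem.
Qed.

Lemma deg_in_branch_root : deg_in e A c = (deg_in e C c).+1.
Proof.
rewrite /deg_in.
have -> : [set y in A | e c y] = r |: [set y in C | e c y].
  apply/setP => y; rewrite in_setU1 2!in_set.
  have [->|yr] /= := eqVneq y r; first by rewrite rA e_sym.
  apply/andP/andP => -[yA ecy]; split => //.
    exact: branch_closed branch_root_mem yA yr ecy.
  exact: (subsetP branch_subA).
by rewrite cardsU1 in_set (negPf root_notin_branch).
Qed.

Lemma T3_rest : T3_in e A r -> T3_in e A' r.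
Proof. by move=> t3 x xA' xr; rewrite -deg_in_rest //; apply: t3; case/setDP: xA'. Qed.

Lemma T3_branch : T3_in e A r -> T3_in e C c.
Proof.
move=> t3 x xC xc; rewrite -deg_in_branch //.
apply: t3; first exact: (subsetP branch_subA).
by apply: contraTneq xC => ->; apply: root_notin_branch.
Qed.

(* The branch root c is a leaf of A exactly when it has no neighbour in C. *)
Lemma num_leaves_split : num_leaves_in e A r =
  (num_leaves_in e A' r + num_leaves_in e C c + (deg_in e C c == 0%N))%N.
Proof.
rewrite /num_leaves_in (big_setID C) /= (setIidPr branch_subA) addnC -addnA.
congr (_ + _)%N.
  apply: eq_bigr => x xA'; rewrite /leaf_in.
  by have [//|xr] := eqVneq x r; rewrite deg_in_rest.
rewrite (bigD1 c) ?branch_root_mem // [in RHS](bigD1 c) ?branch_root_mem //=.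
rewrite addnC /leaf_in eqxx deg_in_branch_root eqSS branch_root_neq /= add0n.
congr (_ + _)%N; apply: eq_bigr => x /andP[xC xc].
have xr : x != r by apply: contraTneq xC => ->; apply: root_notin_branch.
by rewrite deg_in_branch // xc xr.
Qed.

Lemma branch_leaf : deg_in e C c = 0%N -> C = [set c].
Proof.
move=> /eqP; rewrite cards_eq0 => /eqP noedge; apply/setP => x; rewrite inE.
apply/idP/eqP => [xC|->]; last exact: branch_root_mem.
have /connectP[[|y p] /= pth ->] := connected_branch branch_root_mem xC => //.
move: pth => /andP[/and3P[_ yC ecy] _].
by have := in_set0 y; rewrite -noedge inE yC ecy.
Qed.

Local Notation branch_subtrees := (set0 |: subtrees_in e C c).

Lemma branch_subtrees_sub Q : Q \in branch_subtrees -> Q \subset C.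
Proof. by case/setU1P => [->|]; rewrite ?sub0set // mem_subtrees_in => /and3P[]. Qed.

Lemma subtree_rest S : S \in subtrees_in e A r -> S :&: A' \in subtrees_in e A' r.
Proof.
rewrite !mem_subtrees_in => /and3P[/subtreeP[_ S_conn] rS SA].
have rS' : r \in S :&: A' by rewrite inE rS root_in_rest.
rewrite subsetIr rS' !andbT; apply/subtreeP; split; first by apply/set0Pn; exists r.
apply: (connected_in_closed e_sym _ rS') => [u y|x /setIP[xS _]]; last exact: S_conn.
rewrite !in_setI => /andP[uS uA'] ur yS euy; rewrite yS /=.
exact: rest_closed uA' ur (subsetP SA y yS) euy.
Qed.

Lemma subtree_branch S : S \in subtrees_in e A r -> S :&: C \in branch_subtrees.
Proof.
rewrite mem_subtrees_in => /and3P[/subtreeP[_ S_conn] rS SA].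
have [->|/set0Pn[w wB]] := eqVneq (S :&: C) set0; first by rewrite setU11.
have closedB u y : u \in S :&: C -> u != c -> y \in S -> e u y -> y \in S :&: C.
  rewrite !in_setI => /andP[uS uC] uc yS euy; rewrite yS /=.
  exact: branch_closed_off_root uC uc (subsetP SA y yS) euy.
have to_c x : x \in S :&: C -> (c \in S :&: C) && connect (induced e (S :&: C)) x c.
  move=> xB; have /connectP[p pth lp] := S_conn x r (subsetP (subsetIl _ _) x xB) rS.
  apply: path_closed_reach closedB xB pth _.
  by rewrite -lp inE (negPf root_notin_branch) andbF orbT.
have /andP[cB _] := to_c w wB.
rewrite setU1r // mem_subtrees_in cB subsetIr !andbT; apply/subtreeP.
split; first by apply/set0Pn; exists c.
by apply: (connected_in_to e_sym cB) => x /to_c/andP[].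
Qed.

Lemma subtree_join X Q : X \in subtrees_in e A' r -> Q \in branch_subtrees ->
  X :|: Q \in subtrees_in e A r.
Proof.
move=> XT QT; have QC := branch_subtrees_sub QT.
move: XT; rewrite !mem_subtrees_in => /and3P[/subtreeP[_ X_conn] rX XA'].
have rXQ : r \in X :|: Q by rewrite inE rX.
rewrite rXQ subUset (subset_trans XA' (subsetDl A C)) (subset_trans QC branch_subA).
rewrite !andbT; apply/subtreeP; split; first by apply/set0Pn; exists r.
apply: (connected_in_to e_sym rXQ) => x /setUP[xX|xQ].
  exact: induced_connect_sub (subsetUl X Q) (X_conn x r xX rX).
move: QT; case/setU1P => [Q0|]; first by move: xQ; rewrite Q0 inE.
rewrite mem_subtrees_in => /and3P[/subtreeP[_ Q_conn] cQ _].
apply: connect_trans (induced_connect_sub (subsetUr X Q) (Q_conn x c xQ cQ)) _.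
by apply: connect1; rewrite inducedE !in_setU cQ rX orbT e_sym.
Qed.

Lemma setI_rest_branch (X Q : {set T}) : X \subset A' -> Q \subset C -> X :&: Q = set0.
Proof.
move=> XA' QC; apply/setP => x; rewrite in_set0 in_setI.
case: (boolP (x \in X)) => // /(subsetP XA'); rewrite in_setD => /andP[/negPf xC _].
exact: contraFF (subsetP QC x) xC.
Qed.

Lemma setUI_rest_branch (X Q : {set T}) : X \subset A' -> Q \subset C ->
  (X :|: Q) :&: A' = X /\ (X :|: Q) :&: C = Q.
Proof.
move=> XA' QC; rewrite !setIUl (setIidPl XA') (setIidPl QC).
rewrite (setI_rest_branch XA' (subxx C)) [Q :&: _]setIC (setI_rest_branch (subxx _) QC).
by rewrite setU0 set0U.
Qed.

Local Notation join := (fun p : {set T} * {set T} => p.1 :|: p.2).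

Lemma subtrees_split :
  subtrees_in e A r = join @: setX (subtrees_in e A' r) branch_subtrees.
Proof.
apply/setP => S; apply/idP/imsetP => [ST|[[X Q]]]; last first.
  by rewrite in_setX => /andP[XT QT] ->; apply: subtree_join.
exists (S :&: A', S :&: C); first by rewrite in_setX subtree_rest ?subtree_branch.
move: ST; rewrite mem_subtrees_in => /and3P[_ _ /subsetP SA].
rewrite /= -setIUr; apply/setP => x; rewrite in_setI in_setU in_setD.
by case: (boolP (x \in S)) => // /SA ->; rewrite andbT orNb.
Qed.

Lemma join_inj : {in setX (subtrees_in e A' r) branch_subtrees &, injective join}.
Proof.
move=> [X1 Q1] [X2 Q2]; rewrite !in_setX !mem_subtrees_in /=.
move=> /andP[/and3P[_ _ X1A'] /branch_subtrees_sub Q1C].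
move=> /andP[/and3P[_ _ X2A'] /branch_subtrees_sub Q2C] eqXQ.
have [eX1 eQ1] := setUI_rest_branch X1A' Q1C.
have [eX2 eQ2] := setUI_rest_branch X2A' Q2C.
by congr pair; [rewrite -eX1 eqXQ eX2 | rewrite -eQ1 eqXQ eQ2].
Qed.

Lemma card_subtrees_split :
  #|subtrees_in e A r| = (#|subtrees_in e A' r| * (#|subtrees_in e C c|).+1)%N.
Proof.
by rewrite subtrees_split (card_in_imset join_inj) cardsX cardsU1 set0_notin_subtrees_in.
Qed.

Lemma size_sum_split : size_sum e A r =
  (size_sum e A' r * (#|subtrees_in e C c|).+1 +
   #|subtrees_in e A' r| * size_sum e C c)%N.
Proof.
rewrite {1}/size_sum subtrees_split (big_imset _ join_inj) /=.
rewrite (eq_bigr (fun p : {set T} * {set T} => #|p.1| + #|p.2|)%N); last first.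
  move=> [X Q]; rewrite in_setX mem_subtrees_in.
  move=> /andP[/and3P[_ _ XA'] /branch_subtrees_sub QC].
  by rewrite /= cardsU (setI_rest_branch XA' QC) cards0 subn0.
rewrite (sum_setX _ _ (fun X : {set T} => #|X|) (fun Q : {set T} => #|Q|)).
by rewrite cardsU1 big_setU1 ?set0_notin_subtrees_in //= cards0 add0n.
Qed.

Lemma subtree_invariant_join : T3_in e A r ->
  subtree_invariant e A' r -> subtree_invariant e C c -> subtree_invariant e A r.
Proof.
move=> A_T3 inv_rest inv_branch; rewrite /subtree_invariant card_subtrees_split.
rewrite size_sum_split card_branch_split num_leaves_split deg_in_root_split.
have L_rest := num_leaves_in_lt e root_in_rest.
have [dC0|dC_pos] := eqVneq (deg_in e C c) 0%N.
  have C1 := branch_leaf dC0.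
  have -> : #|subtrees_in e C c| = 1%N by rewrite C1 subtrees_in_set1 cards1.
  have -> : size_sum e C c = 1%N by rewrite C1 size_sum_set1.
  have -> : #|C| = 1%N by rewrite C1 cards1.
  have -> : num_leaves_in e C c = 0%N by rewrite C1 num_leaves_in_set1.
  by rewrite addn0 muln1 !addn1; apply: lambda_invariant_add_leaf.
have dC2 : (2 <= deg_in e C c)%N.
  have := A_T3 c cA branch_root_neq.
  by rewrite deg_in_branch_root ltnS; apply; rewrite lt0n.
rewrite addn0; apply: lambda_invariant_add_branch L_rest _ dC2 inv_rest inv_branch.
exact: num_leaves_in_lt branch_root_mem.
Qed.

End Branch.

Lemma exists_root_neighbour (T : finType) (e : rel T) (A : {set T}) r :
  r \in A -> connected_in e A -> (1 < #|A|)%N -> exists2 c, c \in A & e r c.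
Proof.
move=> rA A_conn; rewrite (cardsD1 r) rA ltnS card_gt0 => /set0Pn[x /setD1P[xr xA]].
have /connectP[[|c p] /= pth lp] := A_conn r x rA xA; first by rewrite lp eqxx in xr.
by case/andP: pth => /and3P[_ cA erc] _; exists c.
Qed.

Lemma subtree_invariant_holds (T : finType) (e : rel T) (A : {set T}) r :
  symmetric e -> irreflexive e -> r \in A -> connected_in e A -> acyclic_in e A ->
  T3_in e A r -> subtree_invariant e A r.
Proof.
move=> e_sym e_irr; have [m] := ubnP #|A|; elim: m => // m IHm in A r *.
move=> Am rA A_conn A_acyc A_T3.
have [A1|A2] := leqP #|A| 1.
  have -> : A = [set r] by apply/eqP; rewrite eq_sym eqEcard sub1set rA cards1.
  rewrite /subtree_invariant subtrees_in_set1 !cards1 size_sum_set1.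
  by rewrite num_leaves_in_set1 deg_in_set1.
have [c cA erc] := exists_root_neighbour rA A_conn A2.
have cardA := card_branch_split (r := r) e_irr cA erc.
have C_pos : (0 < #|branch e A r c|)%N.
  by rewrite card_gt0; apply/set0Pn; exists c; apply: branch_root_mem.
have A'_pos : (0 < #|A :\: branch e A r c|)%N.
  by rewrite card_gt0; apply/set0Pn; exists r; apply: root_in_rest.
apply: (subtree_invariant_join (c := c)) => //; apply: IHm.
- by rewrite cardA in Am; lia.
- exact: root_in_rest.
- exact: connected_rest.
- exact: acyclic_in_sub (subsetDl _ _) A_acyc.
- exact: T3_rest.
- by rewrite cardA in Am; lia.
- exact: branch_root_mem.
- exact: connected_branch.
- exact: acyclic_in_sub (branch_subA e_irr cA erc) A_acyc.
- exact: T3_branch.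
Qed.

Local Open Scope ring_scope.

Lemma ratio_ge (N S n k : nat) : (0 < N)%N ->
  (N * (5 * n + k + 4) <= 10 * S)%N ->
  (n%:R + 1) / 2 + (k%:R - 1) / 10 <= S%:R / N%:R :> rat.
Proof.
move=> N_pos ineq; rewrite ler_pdivlMr ?ltr0n //.
have -> : ((n%:R + 1) / 2 + (k%:R - 1) / 10) * N%:R =
          (N * (5 * n + k + 4))%:R / 10%:R :> rat.
  by rewrite natrM !natrD; field.
by rewrite ler_pdivrMr ?ltr0n // -natrM ler_nat [(S * _)%N]mulnC.
Qed.

Section WholeTree.
Variables (T : finType) (e : rel T) (v : T).

Lemma deg_in_setT x : deg_in e setT x = deg e x.
Proof. by apply: eq_card => y; rewrite !inE. Qed.

Lemma connected_in_setT : (forall x y, connect e x y) -> connected_in e setT.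
Proof.
move=> conn x y _ _; rewrite (@eq_connect _ _ e) // => a b.
by rewrite inducedE !inE.
Qed.

Lemma T3_in_setT : in_T3star e v -> T3_in e setT v.
Proof.
move=> T3v x _ xv; rewrite !deg_in_setT; case: T3v => [T1|[_ T3x]]; last exact: T3x.
have : (1 < #|T|)%N by apply: leq_trans (max_card (mem [set x; v])); rewrite cards2 xv.
by rewrite T1.
Qed.

Lemma subtrees_at_setT : subtrees_at e v = subtrees_in e setT v.
Proof. by apply/setP => S; rewrite !inE subsetT andbT. Qed.

Lemma num_nonleaves_setT : num_nonleaves e v = (#|T| - num_leaves_in e setT v)%N.
Proof.
have -> : num_leaves_in e setT v = #|[set x | leaf e v x]|.
  rewrite /num_leaves_in -sum1_card [RHS]big_mkcond [LHS]big_mkcond /=.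
  apply: eq_bigr => x _; rewrite in_setT inE /leaf_in /leaf deg_in_setT.
  by case: (_ && _).
rewrite -(cardsC [set x | leaf e v x]) addKn /num_nonleaves.
by apply: eq_card => x; rewrite !inE.
Qed.

End WholeTree.

Theorem mainTheorem12 (T : finType) (e : rel T) (v : T) :
  is_tree e -> in_T3star e v ->
  (#|T|%:R + 1) / 2 + ((num_nonleaves e v)%:R - 1) / 10 <= lambda e v.
Proof.
move=> tree T3v; have [e_sym e_irr conn _] := tree.
have [ineq N_ge _] := subtree_invariant_holds e_sym e_irr (in_setT v)
  (connected_in_setT conn) (tree_acyclic tree) (T3_in_setT T3v).
rewrite /lambda subtrees_at_setT num_nonleaves_setT; apply: ratio_ge.
  by apply: leq_trans N_ge; rewrite expn_gt0.
by rewrite -cardsT.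
Qed.
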